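(* For every regular language $L\subseteq\Sigma^*$, the nondeterministic state complexity $\mathrm{ns}(L)$ equals the least degree of any boolean representation of the free monoid $\Sigma^*$ that extends the canonical representation $\kappa_L\circ\mu_L\colon\Sigma^*\to\mathbf{JSL}(\mathrm{LQ}(L),\mathrm{LQ}(L))$, $w\mapsto(K\mapsto w^{-1}K)$.
   Context: $\mathrm{LQ}(L)$ is the finite semilattice (under $\subseteq$, join $=\cup$) of all finite unions, including $\emptyset$, of left derivatives $u^{-1}L=\{w:uw\in L\}$. For a finite semilattice $S$, $\mathbf{JSL}(S,S)$ is the set of join-preserving maps $S\to S$, a monoid under $f\cdot g:=g\circ f$. A boolean representation of a monoid $M$ is a finite semilattice $S$ with a monoid morphism $\rho\colon M\to\mathbf{JSL}(S,S)$; its degree is $|J(S)|$, the number of join-irreducible elements of $S$ ($j\ne\bot$ with $j=\bigvee X\Rightarrow j\in X$). An equivariant map $\rho_1\to\rho_2$ between representations on $S_1,S_2$ is a join-preserving $f\colon S_1\to S_2$ with $f(\rho_1(m)(s))=\rho_2(m)(f(s))$ for all $m,s$; $\rho_2$ extends $\rho_1$ if there is an injective equivariant map $\rho_1\to\rho_2$. $\mathrm{ns}(L)$ is the least number of states of an nfa (finite state set, transition relations, sets of initial and final states; several initial states allowed) accepting $L$. *)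

From HB Require Import structures.
From mathcomp Require Import all_boot all_order.
Set Implicit Arguments. Unset Strict Implicit. Unset Printing Implicit Defensive.
Import Order.Theory.
Local Open Scope order_scope.

Definition lang (Sigma : Type) := seq Sigma -> bool.

Definition lquot (Sigma : Type) (u : seq Sigma) (K : lang Sigma) : lang Sigma :=
  fun w => K (u ++ w).

Definition lang0 (Sigma : Type) : lang Sigma := fun _ => false.
Definition langU (Sigma : Type) (K K' : lang Sigma) : lang Sigma :=
  fun w => K w || K' w.

Definition union_lquots (Sigma : Type) (L : lang Sigma) (us : seq (seq Sigma))
  : lang Sigma := fun w => has (fun u => L (u ++ w)) us.

(** Membership in LQ(L): finite unions (including the empty one) of left
    derivatives of L. *)
Definition inLQ (Sigma : Type) (L : lang Sigma) (K : lang Sigma) : Prop :=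
  exists us : seq (seq Sigma), K = union_lquots L us.

Record dfa (Sigma Q : finType) := Dfa {
  dfa_init : Q;
  dfa_trans : Q -> Sigma -> Q;
  dfa_final : pred Q }.

Definition dfa_accept (Sigma Q : finType) (A : dfa Sigma Q) : lang Sigma :=
  fun w => dfa_final A (foldl (dfa_trans A) (dfa_init A) w).

Definition regular (Sigma : finType) (L : lang Sigma) : Prop :=
  exists (Q : finType) (A : dfa Sigma Q), dfa_accept A =1 L.

Record nfa (Sigma Q : finType) := Nfa {
  nfa_init : pred Q;
  nfa_trans : Q -> Sigma -> Q -> bool;
  nfa_final : pred Q }.

Definition nfa_step (Sigma Q : finType) (A : nfa Sigma Q) (X : {set Q}) (a : Sigma)
  : {set Q} := [set q' | [exists q in X, nfa_trans A q a q']].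

Definition nfa_accept (Sigma Q : finType) (A : nfa Sigma Q) : lang Sigma :=
  fun w => [exists q in foldl (nfa_step A) [set q | nfa_init A q] w, nfa_final A q].

Definition is_ns (Sigma : finType) (L : lang Sigma) (n : nat) : Prop :=
  (exists (Q : finType) (A : nfa Sigma Q), nfa_accept A =1 L /\ #|Q| = n) /\
  (forall (Q : finType) (A : nfa Sigma Q), nfa_accept A =1 L -> n <= #|Q|).

(** Finite semilattices: a finite join-semilattice with bottom (finite joins,
    including the empty one) is the same thing as a nonempty finite lattice. *)

Definition join_preserving (d : Order.disp_t) (S : finTBLatticeType d)
  (g : S -> S) : Prop :=
  g \bot = \bot /\ forall x y, g (x `|` y) = g x `|` g y.

(** Boolean representation of the free monoid Sigma^*: a monoid morphism
    rho : Sigma^* -> JSL(S,S), where JSL(S,S) has product f . g := g o f. *)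
Definition bool_rep (Sigma : finType) (d : Order.disp_t) (S : finTBLatticeType d)
  (rho : seq Sigma -> S -> S) : Prop :=
  [/\ forall w, join_preserving (rho w),
      forall x, rho [::] x = x &
      forall u v x, rho (u ++ v) x = rho v (rho u x)].

Definition join_irr (d : Order.disp_t) (S : finTBLatticeType d) (j : S) : bool :=
  (j != \bot) && [forall X : {set S}, (j == \join_(x in X) x) ==> (j \in X)].

Definition degree (d : Order.disp_t) (S : finTBLatticeType d) : nat :=
  #|[set j : S | join_irr j]|.

(** rho extends the canonical representation kappa_L o mu_L on LQ(L)
    (w |-> (K |-> w^{-1} K)): there is an injective, join-preserving,
    equivariant map LQ(L) -> S. *)
Definition extends_canonical (Sigma : finType) (L : lang Sigma)
  (d : Order.disp_t) (S : finTBLatticeType d) (rho : seq Sigma -> S -> S) : Prop :=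
  exists f : lang Sigma -> S,
    [/\ f (@lang0 Sigma) = \bot,
        forall K K', inLQ L K -> inLQ L K' -> f (langU K K') = f K `|` f K',
        forall K K', inLQ L K -> inLQ L K' -> f K = f K' -> K = K' &
        forall w K, inLQ L K -> f (lquot w K) = rho w (f K)].

Definition is_min_ext_degree (Sigma : finType) (L : lang Sigma) (n : nat) : Prop :=
  (exists (d : Order.disp_t) (S : finTBLatticeType d) (rho : seq Sigma -> S -> S),
      [/\ bool_rep rho, extends_canonical L rho & degree S = n]) /\
  (forall (d : Order.disp_t) (S : finTBLatticeType d) (rho : seq Sigma -> S -> S),
      bool_rep rho -> extends_canonical L rho -> n <= degree S).

From HB Require Import structures.
From mathcomp Require Import all_boot all_order.
From Stdlib Require Import ClassicalEpsilon FunctionalExtensionality.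
Set Implicit Arguments. Unset Strict Implicit. Unset Printing Implicit Defensive.
Import Order.Theory.

(** From an nfa A with state set Q accepting L we build the
    lattice of "closed" sets of states: X is closed when every state whose
    language is included in the language of X already belongs to X.  Reading
    a word and closing gives a boolean representation of Sigma^*; the map
    sending K in LQ(L) to the closed set of states whose language is
    contained in K is an injective equivariant join-morphism; and every
    join-irreducible closed set is the closure of a single state, so the
    degree is at most |Q|.

    Conversely, given a representation rho on S with an
    equivariant embedding f of LQ(L), the join-irreducibles of S are the
    states of an nfa accepting L: start from the join-irreducibles below f L,
    step from j to j' when j' <= rho a j, and accept j when j lies below no
    f K with K in LQ(L) and [::] \notin K.  This uses that every element is
    the join of the join-irreducibles below it.  Hence n <= |J(S)|. *)

(** A classical boolean reflection of propositions, needed to define sets of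
    states by properties quantifying over all words. *)
Definition asbool (P : Prop) : bool :=
  if excluded_middle_informative P then true else false.

Lemma asboolP (P : Prop) : reflect P (asbool P).
Proof. by rewrite /asbool; case: excluded_middle_informative => h; constructor. Qed.

Lemma asbool_iff (P P' : Prop) : (P <-> P') -> asbool P = asbool P'.
Proof. by move=> h; apply/asboolP/asboolP; rewrite h. Qed.

Section LeftQuotients.
Variables (Sigma : Type) (L : lang Sigma).

Lemma inLQ0 : inLQ L (@lang0 Sigma).
Proof. by exists [::]. Qed.

Lemma inLQU (K K' : lang Sigma) : inLQ L K -> inLQ L K' -> inLQ L (langU K K').
Proof.
case=> us -> [us' ->]; exists (us ++ us'); apply: functional_extensionality => w.
by rewrite /langU /union_lquots has_cat.
Qed.

Lemma inLQ_lquot (w : seq Sigma) : inLQ L (lquot w L).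
Proof.
by exists [:: w]; apply: functional_extensionality => x; rewrite /union_lquots /= orbF.
Qed.

Lemma inLQ_self : inLQ L L.
Proof. by rewrite -[L]/(lquot [::] L); exact: inLQ_lquot. Qed.

End LeftQuotients.

(** ** The representation of an nfa on its closed sets of states *)
Section ClosedStateSets.
Variables (Sigma Q : finType) (A : nfa Sigma Q).

Local Notation reach := (foldl (nfa_step A)).

Definition lang_of (X : {set Q}) : lang Sigma :=
  fun w => [exists q in reach X w, nfa_final A q].

Lemma mem_reach (w : seq Sigma) (X : {set Q}) (q' : Q) :
  (q' \in reach X w) = [exists q in X, q' \in reach [set q] w].
Proof.
elim: w X q' => [|a w IH] X q' /=.
  apply/idP/existsP => [q'X|[q /andP[qX /set1P ->]]] //.
  by exists q'; rewrite q'X set11.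
rewrite IH; apply/existsP/existsP => [[p /andP[]]|[q /andP[qX]]].
  rewrite inE => /existsP[q /andP[qX aqp]] hp; exists q; rewrite qX /= IH.
  apply/existsP; exists p; rewrite hp andbT inE.
  by apply/existsP; exists q; rewrite set11.
rewrite IH => /existsP[p /andP[]]; rewrite inE => /existsP[_ /andP[/set1P -> aqp]] hp.
by exists p; rewrite hp andbT inE; apply/existsP; exists q; rewrite qX.
Qed.

Lemma lang_ofE (X : {set Q}) (w : seq Sigma) :
  lang_of X w = [exists q in X, lang_of [set q] w].
Proof.
apply/existsP/existsP => [[q' /andP[]]|[q /andP[qX /existsP[q' /andP[q'r fq']]]]].
  rewrite mem_reach => /existsP[q /andP[qX q'r]] fq'.
  by exists q; rewrite qX; apply/existsP; exists q'; rewrite q'r.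
by exists q'; rewrite fq' mem_reach andbT; apply/existsP; exists q; rewrite qX.
Qed.

Lemma lang_of_sub (X Y : {set Q}) (w : seq Sigma) :
  X \subset Y -> lang_of X w -> lang_of Y w.
Proof.
move=> /subsetP XY; rewrite !(lang_ofE _ w) => /existsP[q /andP[qX h]].
by apply/existsP; exists q; rewrite XY.
Qed.

Lemma lang_ofU (X Y : {set Q}) (w : seq Sigma) :
  lang_of (X :|: Y) w = lang_of X w || lang_of Y w.
Proof.
rewrite !(lang_ofE _ w); apply/existsP/orP => [[q]|[] /existsP[q /andP[qX h]]].
- by rewrite inE => /andP[/orP[] qXY h]; [left|right]; apply/existsP; exists q;
    rewrite qXY.
- by exists q; rewrite inE qX.
- by exists q; rewrite inE qX orbT.
Qed.

Lemma lang_of0 (w : seq Sigma) : lang_of set0 w = false.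
Proof. by rewrite lang_ofE; apply/existsP => -[q]; rewrite inE. Qed.

Lemma lang_of_reach (X : {set Q}) (u w : seq Sigma) :
  lang_of (reach X u) w = lang_of X (u ++ w).
Proof. by rewrite /lang_of foldl_cat. Qed.

Definition closure (X : {set Q}) : {set Q} :=
  [set q | asbool (forall w, lang_of [set q] w -> lang_of X w)].

Lemma sub_closure (X : {set Q}) : X \subset closure X.
Proof.
apply/subsetP => q qX; rewrite inE; apply/asboolP => w; apply: lang_of_sub.
by rewrite sub1set.
Qed.

Lemma lang_of_closure (X : {set Q}) (w : seq Sigma) : lang_of (closure X) w = lang_of X w.
Proof.
apply/idP/idP; last exact: lang_of_sub (sub_closure X).
by rewrite lang_ofE => /existsP[q /andP[]]; rewrite inE => /asboolP; apply.
Qed.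

Lemma closure_ext (X Y : {set Q}) : lang_of X =1 lang_of Y -> closure X = closure Y.
Proof.
move=> XY; apply/setP => q; rewrite !inE; apply: asbool_iff.
by split=> H w /H; rewrite XY.
Qed.

Lemma closureK (X : {set Q}) : closure (closure X) = closure X.
Proof. by apply: closure_ext => w; rewrite lang_of_closure. Qed.

Lemma closure_mono (X Y : {set Q}) : X \subset Y -> closure X \subset closure Y.
Proof.
move=> XY; apply/subsetP => q; rewrite !inE => /asboolP h; apply/asboolP => w /h.
exact: lang_of_sub.
Qed.

Record cset := Cset { cset_val : {set Q}; cset_closed : closure cset_val == cset_val }.
HB.instance Definition _ := [isSub for cset_val].
HB.instance Definition _ := [Finite of cset by <:].

Fact cset_display : Order.disp_t. Proof. exact: Order.Disp tt tt. Qed.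

Definition cset_le (x y : cset) := cset_val x \subset cset_val y.

Lemma cset_le_refl : reflexive cset_le.
Proof. by move=> x; exact: subxx. Qed.

Lemma cset_le_anti : antisymmetric cset_le.
Proof. by move=> x y xy; apply/val_inj/eqP; rewrite eqEsubset. Qed.

Lemma cset_le_trans : transitive cset_le.
Proof. by move=> y x z; exact: subset_trans. Qed.

HB.instance Definition _ := Order.Le_isPOrder.Build cset_display cset
  cset_le_refl cset_le_anti cset_le_trans.

Lemma closure_cset (x : cset) : closure (cset_val x) = cset_val x.
Proof. exact/eqP/cset_closed. Qed.

Definition close (X : {set Q}) : cset := Cset (introT eqP (closureK X)).

Lemma closureI (x y : cset) :
  closure (cset_val x :&: cset_val y) == cset_val x :&: cset_val y.
Proof.
rewrite eqEsubset sub_closure andbT subsetI.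
apply/andP; split; [rewrite -{2}(closure_cset x)|rewrite -{2}(closure_cset y)].
  exact/closure_mono/subsetIl.
exact/closure_mono/subsetIr.
Qed.

Definition cset_meet (x y : cset) : cset := Cset (closureI x y).
Definition cset_join (x y : cset) : cset := close (cset_val x :|: cset_val y).

Lemma cset_meetP (x y z : cset) : (x <= cset_meet y z)%O = (x <= y)%O && (x <= z)%O.
Proof. exact: subsetI. Qed.

Lemma cset_joinP (x y z : cset) : (cset_join x y <= z)%O = (x <= z)%O && (y <= z)%O.
Proof.
rewrite /Order.le /= /cset_le /= -subUset; apply/idP/idP => h.
  exact: subset_trans (sub_closure _) h.
by rewrite -(closure_cset z) closure_mono.
Qed.

HB.instance Definition _ :=
  Order.POrder_MeetJoin_isLattice.Build cset_display cset cset_meetP cset_joinP.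

Lemma cset_botP (x : cset) : (close set0 <= x)%O.
Proof. by rewrite /Order.le /= /cset_le /= -(closure_cset x) closure_mono ?sub0set. Qed.

HB.instance Definition _ := Order.hasBottom.Build cset_display cset cset_botP.

Definition cset_top : cset := Cset (introT eqP (closureK setT)).

Lemma cset_topP (x : cset) : (x <= cset_top)%O.
Proof. by rewrite /Order.le /= /cset_le /= -(closure_cset x) closure_mono ?subsetT. Qed.

HB.instance Definition _ := Order.hasTop.Build cset_display cset cset_topP.

(** A closed set is determined by its language; the lattice operations and
    the action below are described on languages. *)
Lemma cset_lang_inj (x y : cset) :
  lang_of (cset_val x) =1 lang_of (cset_val y) -> x = y.
Proof.
move=> xy; apply: val_inj.
by rewrite /= -(closure_cset x) -(closure_cset y) (closure_ext xy).
Qed.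

Lemma lang_of_join (x y : cset) (w : seq Sigma) :
  lang_of (cset_val (x `|` y)%O) w = lang_of (cset_val x) w || lang_of (cset_val y) w.
Proof. by rewrite /= lang_of_closure lang_ofU. Qed.

Lemma lang_of_bot (w : seq Sigma) : lang_of (cset_val (\bot : cset)%O) w = false.
Proof. by rewrite /= lang_of_closure lang_of0. Qed.

Definition nfa_rep (w : seq Sigma) (x : cset) : cset := close (reach (cset_val x) w).

Lemma lang_of_rep (u : seq Sigma) (x : cset) (w : seq Sigma) :
  lang_of (cset_val (nfa_rep u x)) w = lang_of (cset_val x) (u ++ w).
Proof. by rewrite /= lang_of_closure lang_of_reach. Qed.

Lemma nfa_rep_bool_rep : bool_rep nfa_rep.
Proof.
split.
- move=> w; split; first by apply: cset_lang_inj => v; rewrite lang_of_rep !lang_of_bot.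
  by move=> x y; apply: cset_lang_inj => v; rewrite lang_of_rep !lang_of_join !lang_of_rep.
- by move=> x; apply: cset_lang_inj => v; rewrite lang_of_rep.
- by move=> u v x; apply: cset_lang_inj => v'; rewrite !lang_of_rep catA.
Qed.

Definition embed (K : lang Sigma) : cset :=
  close [set q | asbool (forall w, lang_of [set q] w -> K w)].

Lemma lang_of_embed (K : lang Sigma) (Y : {set Q}) :
  K =1 lang_of Y -> lang_of (cset_val (embed K)) =1 K.
Proof.
move=> KY w; rewrite /= lang_of_closure; apply/idP/idP.
  by rewrite lang_ofE => /existsP[q /andP[]]; rewrite inE => /asboolP; apply.
rewrite KY; apply: lang_of_sub; apply/subsetP => q qY; rewrite inE.
by apply/asboolP => v h; rewrite KY; apply: lang_of_sub h; rewrite sub1set.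
Qed.

Variable L : lang Sigma.
Hypothesis accA : nfa_accept A =1 L.

Lemma inLQ_lang_of (K : lang Sigma) : inLQ L K -> exists Y, K =1 lang_of Y.
Proof.
case=> us ->; exists (\bigcup_(u <- us) reach [set q | nfa_init A q] u) => w.
elim: us => [|u us IH]; first by rewrite big_nil lang_of0.
by rewrite big_cons lang_ofU -IH lang_of_reach /union_lquots /= -accA.
Qed.

Lemma nfa_rep_extends : extends_canonical L nfa_rep.
Proof.
exists embed; split.
- by apply: cset_lang_inj => w; rewrite lang_of_bot (@lang_of_embed _ set0) // => v;
    rewrite lang_of0.
- move=> K K' /inLQ_lang_of[Y KY] /inLQ_lang_of[Y' KY']; apply: cset_lang_inj => w.
  rewrite lang_of_join (@lang_of_embed _ (Y :|: Y'))
    ?(lang_of_embed KY) ?(lang_of_embed KY') //.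
  by move=> v; rewrite lang_ofU /langU KY KY'.
- move=> K K' /inLQ_lang_of[Y KY] /inLQ_lang_of[Y' KY'] e.
  apply: functional_extensionality => w.
  by rewrite -(lang_of_embed KY) -(lang_of_embed KY') e.
- move=> w K /inLQ_lang_of[Y KY]; apply: cset_lang_inj => v.
  rewrite lang_of_rep (lang_of_embed KY) (@lang_of_embed _ (reach Y w)) //.
  by move=> v'; rewrite lang_of_reach /lquot KY.
Qed.

Lemma lang_of_joins (s : seq cset) (w : seq Sigma) :
  lang_of (cset_val (\join_(x <- s) x)%O) w = has (fun x => lang_of (cset_val x) w) s.
Proof.
elim: s => [|x s IH]; first by rewrite big_nil lang_of_bot.
by rewrite big_cons lang_of_join IH.
Qed.

Definition atom (q : Q) : cset := close [set q].

(** Every closed set is the join of the atoms of its states, so every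
    join-irreducible closed set is an atom. *)
Lemma join_irr_cset (j : cset) : join_irr j -> exists q, j = atom q.
Proof.
case/andP=> _ /forallP /(_ [set atom q | q in cset_val j]) /implyP irr.
have /irr/imsetP[q _ ->] : j == (\join_(x in [set atom q | q in cset_val j]) x)%O.
  apply/eqP/cset_lang_inj => w; rewrite -big_filter lang_of_joins lang_ofE.
  apply/existsP/hasP => [[q /andP[qj h]]|[x]].
    exists (atom q); last by rewrite /= lang_of_closure.
    by rewrite mem_filter mem_index_enum andbT imset_f.
  rewrite mem_filter mem_index_enum andbT => /imsetP[q qj ->].
  by rewrite /= lang_of_closure => h; exists q; rewrite qj.
by exists q.
Qed.

Lemma degree_cset : degree cset <= #|Q|.
Proof.
rewrite /degree -cardsT; apply: leq_trans (leq_imset_card atom _).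
apply/subset_leq_card/subsetP => j; rewrite inE => /join_irr_cset[q ->].
by rewrite imset_f ?inE.
Qed.

End ClosedStateSets.

(** In a finite lattice every element is the join of the join-irreducible
    elements below it (induction on the number of elements strictly below). *)
Lemma join_irr_decomp (d : Order.disp_t) (S : finTBLatticeType d) (s : S) :
  s = (\join_(j | join_irr j && (j <= s)%O) j)%O.
Proof.
suff decomp n : forall s : S, #|[set y : S | (y < s)%O]| < n ->
    s = (\join_(j | join_irr j && (j <= s)%O) j)%O by exact: decomp _ s (ltnSn _).
elim: n => // n IH {}s below_s.
apply/eqP; rewrite eq_le; apply/andP; split; last by apply/joinsP => j /andP[].
have [->|s_ne0] := eqVneq s \bot%O; first by rewrite le0x.
have [s_irr|] := boolP (join_irr s).
  by apply: (@joins_sup _ _ _ _ _ id); rewrite s_irr lexx.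
rewrite /join_irr s_ne0 negb_forall => /existsP[X].
rewrite negb_imply => /andP[/eqP sX sNX].
rewrite [X in (X <= _)%O]sX; apply/joinsP => x xX.
have xs : (x <= s)%O by rewrite sX; apply: (@joins_sup _ _ _ _ _ id).
have xlts : (x < s)%O by rewrite lt_neqAle xs andbT; apply: contraNneq sNX => <-.
have below_x : #|[set y : S | (y < x)%O]| < n.
  move: below_s; rewrite ltnS; apply/leq_trans/proper_card/properP; split.
    by apply/subsetP => y; rewrite !inE => /lt_trans; apply.
  by exists x; rewrite !inE ?ltxx.
rewrite [X in (X <= _)%O](IH x below_x); apply/joinsP => j /andP[j_irr jx].
apply: (@joins_sup _ _ _ j _ id).
by apply/andP; split; [exact: j_irr|exact: le_trans jx xs].
Qed.

(** ** The nfa of join-irreducibles of a representation extending LQ(L) *)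
Section JoinIrreducibleNfa.
Variables (Sigma : finType) (L : lang Sigma) (d : Order.disp_t) (S : finTBLatticeType d)
  (rho : seq Sigma -> S -> S) (f : lang Sigma -> S).
Hypotheses (rho_rep : bool_rep rho) (f0 : f (@lang0 Sigma) = \bot%O)
  (fU : forall K K', inLQ L K -> inLQ L K' -> f (langU K K') = (f K `|` f K')%O)
  (f_inj : forall K K', inLQ L K -> inLQ L K' -> f K = f K' -> K = K')
  (f_equiv : forall w K, inLQ L K -> f (lquot w K) = rho w (f K)).

(** s lies below the image of some member of LQ(L) not containing the empty
    word.  These elements form an ideal; the elements outside it play the role
    of accepting elements. *)
Definition below_eps_free (s : S) : bool :=
  asbool (exists K, [/\ inLQ L K, K [::] = false & (s <= f K)%O]).

Lemma below_eps_free_join (x y : S) :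
  below_eps_free (x `|` y)%O = below_eps_free x && below_eps_free y.
Proof.
apply/asboolP/andP => [[K [hK e]]|[/asboolP[K [hK e h]] /asboolP[K' [hK' e' h']]]].
  by rewrite leUx => /andP[h1 h2]; split; apply/asboolP; exists K.
exists (langU K K'); split; first exact: inLQU.
  by rewrite /langU e e'.
by rewrite fU // leU2.
Qed.

Lemma below_eps_free_joins (I : finType) (P : pred I) (F : I -> S) :
  below_eps_free (\join_(i | P i) F i)%O = [forall (i | P i), below_eps_free (F i)].
Proof.
rewrite -big_andE; apply: (big_morph _ below_eps_free_join).
by apply/asboolP; exists (@lang0 Sigma); split; [exact: inLQ0| |rewrite f0].
Qed.

(** On the image of f, lying in the ideal means avoiding the empty word: if
    f K <= f K' then f (K u K') = f K', so K is contained in K'. *)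
Lemma below_eps_free_f (K : lang Sigma) : inLQ L K -> below_eps_free (f K) = ~~ K [::].
Proof.
move=> hK; apply/asboolP/idP => [[K' [hK' e h]]|/negbTE e]; last by exists K.
have := f_inj (inLQU hK hK') hK'; rewrite fU // (join_r h) => /(_ erefl) KK'.
by move: e; rewrite -KK' /langU; case: (K [::]).
Qed.

Lemma accepting_join_irr (w : seq Sigma) (s : S) :
  ~~ below_eps_free (rho w s) =
  [exists j, [&& join_irr j, (j <= s)%O & ~~ below_eps_free (rho w j)]].
Proof.
have [/(_ w)[rho0 rhoU] _ _] := rho_rep.
rewrite {1}(join_irr_decomp s) (big_morph (rho w) rhoU rho0).
rewrite below_eps_free_joins negb_forall.
apply/existsP/existsP => [[j]|[j /and3P[j_irr js acc]]].
  by rewrite negb_imply => /andP[/andP[j_irr js] acc]; exists j; rewrite j_irr js acc.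
by exists j; rewrite negb_imply j_irr js acc.
Qed.

Definition join_irr_nfa : nfa Sigma {j : S | join_irr j} :=
  Nfa (fun j => (val j <= f L)%O)
      (fun j a j' => (val j' <= rho [:: a] (val j))%O)
      (fun j => ~~ below_eps_free (val j)).

Lemma join_irr_nfa_run (w : seq Sigma) (X : {set {j : S | join_irr j}}) :
  [exists q in foldl (nfa_step join_irr_nfa) X w, nfa_final join_irr_nfa q] =
  [exists q in X, ~~ below_eps_free (rho w (val q))].
Proof.
have [_ rho_nil rho_cat] := rho_rep.
elim: w X => [|a w IH] X /=; first by apply: eq_existsb => q; rewrite rho_nil.
rewrite IH; apply/existsP/existsP => [[q' /andP[]]|[q /andP[qX]]].
  rewrite inE => /existsP[q /andP[qX aqq']] acc; exists q; rewrite qX /=.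
  rewrite -cat1s rho_cat accepting_join_irr; apply/existsP; exists (val q').
  by rewrite (valP q') acc andbT; exact: aqq'.
rewrite -cat1s rho_cat accepting_join_irr => /existsP[j /and3P[j_irr ja acc]].
exists (exist _ j j_irr); rewrite acc andbT inE.
by apply/existsP; exists q; rewrite qX.
Qed.

Lemma join_irr_nfa_accept : nfa_accept join_irr_nfa =1 L.
Proof.
move=> w; rewrite /nfa_accept join_irr_nfa_run.
have <- : ~~ below_eps_free (rho w (f L)) = L w.
  rewrite -f_equiv; last exact: inLQ_self.
  by rewrite below_eps_free_f ?negbK /lquot ?cats0 //; exact: inLQ_lquot.
rewrite accepting_join_irr; apply/existsP/existsP => [[q /andP[]]|[j /and3P[j_irr jL acc]]].
  by rewrite inE => qL acc; exists (val q); rewrite (valP q) acc andbT; exact: qL.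
by exists (exist _ j j_irr); rewrite inE acc andbT; exact: jL.
Qed.

End JoinIrreducibleNfa.

Lemma ns_le_degree (Sigma : finType) (L : lang Sigma) (n : nat) (d : Order.disp_t)
    (S : finTBLatticeType d) (rho : seq Sigma -> S -> S) :
  is_ns L n -> bool_rep rho -> extends_canonical L rho -> n <= degree S.
Proof.
move=> [_ ns_min] rho_rep [f [f0 fU f_inj f_equiv]].
have := ns_min _ _ (join_irr_nfa_accept rho_rep f0 fU f_inj f_equiv).
by rewrite card_sig /degree cardsE.
Qed.

Definition dfa_nfa (Sigma Q : finType) (D : dfa Sigma Q) : nfa Sigma Q :=
  Nfa (pred1 (dfa_init D)) (fun q a q' => dfa_trans D q a == q') (dfa_final D).

Lemma dfa_nfa_accept (Sigma Q : finType) (D : dfa Sigma Q) :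
  nfa_accept (dfa_nfa D) =1 dfa_accept D.
Proof.
have run w q : foldl (nfa_step (dfa_nfa D)) [set q] w = [set foldl (dfa_trans D) q w].
  elim: w q => [|a w IH] q //=; rewrite -IH; congr foldl; apply/setP => q'; rewrite !inE.
  apply/existsP/eqP => [[_ /andP[/set1P -> /eqP]]|->] //.
  by exists q; rewrite set11 /=.
move=> w; rewrite /nfa_accept /dfa_accept.
have -> : [set q | nfa_init (dfa_nfa D) q] = [set dfa_init D].
  by apply/setP => q; rewrite !inE.
rewrite run; apply/existsP/idP => [[q /andP[/set1P -> //]]|fin].
by exists (foldl (dfa_trans D) (dfa_init D) w); rewrite set11.
Qed.

Lemma regular_ns (Sigma : finType) (L : lang Sigma) : regular L -> exists n, is_ns L n.
Proof.
case=> Q0 [D accD].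
pose has_nfa n :=
  asbool (exists (Q : finType) (A : nfa Sigma Q), nfa_accept A =1 L /\ #|Q| = n).
have : exists n, has_nfa n.
  exists #|Q0|; apply/asboolP; exists Q0, (dfa_nfa D).
  by split => // w; rewrite dfa_nfa_accept.
case/ex_minnP => n /asboolP min_nfa minimal; exists n; split => // Q A accA.
by apply: minimal; apply/asboolP; exists Q, A.
Qed.

Theorem theorem4p6 (Sigma : finType) (L : lang Sigma) :
  regular L -> exists n : nat, is_ns L n /\ is_min_ext_degree L n.
Proof.
case/regular_ns=> n ns; exists n; split=> //; split; last first.
  by move=> d S rho rho_rep rho_ext; exact: ns_le_degree ns rho_rep rho_ext.
have [[Q [A [accA cardQ]]] _] := ns.
exists cset_display, (cset A), (@nfa_rep _ _ A); split.
- exact: nfa_rep_bool_rep.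
- exact: nfa_rep_extends accA.
- apply/eqP; rewrite eqn_leq -{1}cardQ degree_cset.
  exact: ns_le_degree ns (nfa_rep_bool_rep A) (nfa_rep_extends accA).
Qed.
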